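(* Let $k\subseteq K$ be fields with $\operatorname{char}k=p>0$, let $m$ be a natural number, let $X$ be a power series indeterminate over $K$, and let $D$ be an integral domain with $k+X^mK[[X]]\subseteq D\subseteq K[[X]]$. Let $M=D\cap XK[[X]]$, and regard $D/M$ as a subfield of $K$ via the map $K[[X]]\to K$, $f\mapsto f(0)$. (i) If $k\subseteq K$ is a root extension, then $D$ is a quasilocal AV-domain whose integral closure is $K[[X]]$. (ii) If $k\subseteq K$ is a bounded root extension, then $D$ is a quasilocal API-domain whose integral closure is $K[[X]]$. (iii) Assuming $k\subseteq K$ is a root extension, $(D,M)$ is an API-domain if and only if $D/M\subseteq K$ is a bounded root extension. (iv) If moreover $[K:k]<\infty$, then $D$ is a complete local AV-domain in case (i), and a complete local API-domain in case (ii).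
   Context: An extension of commutative rings $R\subseteq S$ is a root extension if for each $s\in S$ there is a natural number $n$ with $s^n\in R$, and a bounded root extension if there is a single natural number $n$ with $s^n\in R$ for all $s\in S$. An integral domain $D$ is an AV-domain if for all nonzero $a,b\in D$ there is a natural number $n$ with $a^n\mid b^n$ or $b^n\mid a^n$ in $D$. $D$ is an API-domain if for every nonempty subset $\{d_\alpha\}$ of $D\setminus\{0\}$ there is $n$ with the ideal $(\{d_\alpha^n\})$ principal. Quasilocal means having a unique maximal ideal; local means Noetherian and quasilocal; complete local means local and complete in the $M$-adic topology. The integral closure is taken in the quotient field. *)

From HB Require Import structures.
From mathcomp Require Import all_boot all_order all_algebra.
Set Implicit Arguments. Unset Strict Implicit. Unset Printing Implicit Defensive.
Import Order.TTheory GRing.Theory Num.Theory.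
Local Open Scope ring_scope.

Section PS.
Variable K : fieldType.

(** K[[X]] : the power series f = sum_n (f n) X^n *)
Definition ps := nat -> K.

Definition ps_zero : ps := fun _ => 0.
Definition ps_one : ps := fun n => if n is 0%N then 1 else 0.
Definition ps_const (c : K) : ps := fun n => if n is 0%N then c else 0.
Definition ps_add (f g : ps) : ps := fun n => f n + g n.
Definition ps_opp (f : ps) : ps := fun n => - f n.
Definition ps_sub (f g : ps) : ps := ps_add f (ps_opp g).
Definition ps_mul (f g : ps) : ps :=
  fun n => \sum_(i < n.+1) f i * g (n - i)%N.
Fixpoint ps_exp (f : ps) (n : nat) : ps :=
  if n is n'.+1 then ps_mul f (ps_exp f n') else ps_one.
Fixpoint ps_sum (n : nat) (F : nat -> ps) : ps :=
  if n is n'.+1 then ps_add (ps_sum n' F) (F n') else ps_zero.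

Definition is_subfield (k : K -> Prop) : Prop :=
  k 1 /\ (forall x y, k x -> k y -> k (x - y)) /\
  (forall x y, k x -> k y -> k (x * y)) /\
  (forall x, k x -> x != 0 -> k x^-1).

Definition root_ext (A B : K -> Prop) : Prop :=
  forall x, B x -> exists n : nat, (0 < n)%N /\ A (x ^+ n).
Definition bounded_root_ext (A B : K -> Prop) : Prop :=
  exists n : nat, (0 < n)%N /\ forall x, B x -> A (x ^+ n).
Definition fullK : K -> Prop := fun _ => True.

Definition finite_degree (k : K -> Prop) : Prop :=
  exists (n : nat) (e : nat -> K), forall x : K,
    exists c : nat -> K, (forall i, k (c i)) /\ x = \sum_(i < n) c i * e i.

(** D is a subring of K[[X]] (hence an integral domain) *)
Definition is_subring (D : ps -> Prop) : Prop :=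
  D ps_one /\ (forall f g, D f -> D g -> D (ps_sub f g)) /\
  (forall f g, D f -> D g -> D (ps_mul f g)).

Definition k_plus_XmKX (k : K -> Prop) (m : nat) : ps -> Prop :=
  fun f => exists c g, k c /\ (forall n, (n < m)%N -> g n = 0) /\
                       f = ps_add (ps_const c) g.

Definition maxM (D : ps -> Prop) : ps -> Prop := fun f => D f /\ f 0%N = 0.

(** D/M seen inside K via f |-> f(0) *)
Definition residue (D : ps -> Prop) : K -> Prop :=
  fun c => exists f, D f /\ f 0%N = c.

Definition ideal (D I : ps -> Prop) : Prop :=
  (forall x, I x -> D x) /\ I ps_zero /\
  (forall x y, I x -> I y -> I (ps_add x y)) /\
  (forall d x, D d -> I x -> I (ps_mul d x)).

Definition max_ideal (D I : ps -> Prop) : Prop :=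
  ideal D I /\ ~ I ps_one /\
  (forall J, ideal D J -> (forall x, I x -> J x) ->
     (forall x, J x <-> I x) \/ J ps_one).

Definition unique_max_ideal (D I : ps -> Prop) : Prop :=
  max_ideal D I /\ forall J, max_ideal D J -> forall x, J x <-> I x.

Definition quasilocal (D : ps -> Prop) : Prop := exists I, unique_max_ideal D I.

Definition gen_ideal (D S : ps -> Prop) : ps -> Prop :=
  fun x => forall I, ideal D I -> (forall s, S s -> I s) -> I x.

Definition principal (D I : ps -> Prop) : Prop :=
  exists g, D g /\ forall x, I x <-> exists d, D d /\ x = ps_mul d g.

Definition dvd_in (D : ps -> Prop) (a b : ps) : Prop :=
  exists c, D c /\ b = ps_mul a c.

Definition AV_domain (D : ps -> Prop) : Prop :=
  forall a b, D a -> D b -> a <> ps_zero -> b <> ps_zero ->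
    exists n : nat, (0 < n)%N /\
      (dvd_in D (ps_exp a n) (ps_exp b n) \/ dvd_in D (ps_exp b n) (ps_exp a n)).

Definition API_domain (D : ps -> Prop) : Prop :=
  forall S : ps -> Prop, (forall s, S s -> D s /\ s <> ps_zero) ->
    (exists s, S s) ->
    exists n : nat, (0 < n)%N /\
      principal D (gen_ideal D (fun y => exists s, S s /\ y = ps_exp s n)).

(** The element a/b (a, b in D, b <> 0) of the quotient field of D is
    integral over D: (a/b)^n + c_{n-1}(a/b)^{n-1} + ... + c_0 = 0 with
    c_i in D, i.e. (multiplying by b^n) a^n + sum_i c_i a^i b^(n-i) = 0. *)
Definition integral_frac (D : ps -> Prop) (a b : ps) : Prop :=
  exists (n : nat) (c : nat -> ps), (0 < n)%N /\ (forall i, D (c i)) /\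
    ps_add (ps_exp a n)
      (ps_sum n (fun i => ps_mul (c i) (ps_mul (ps_exp a i) (ps_exp b (n - i)))))
    = ps_zero.

(** The integral closure of D (in its quotient field, which sits inside the
    quotient field of K[[X]]; a/b represents f in K[[X]] iff a = b f) is K[[X]]:
    every f in K[[X]] lies in Frac(D) and is integral over D, and every element
    of Frac(D) integral over D lies in K[[X]]. *)
Definition integral_closure_is_KX (D : ps -> Prop) : Prop :=
  (forall f : ps, exists a b, D a /\ D b /\ b <> ps_zero /\ a = ps_mul b f /\
                              integral_frac D a b) /\
  (forall a b, D a -> D b -> b <> ps_zero -> integral_frac D a b ->
     exists f : ps, a = ps_mul b f).

Definition noetherian (D : ps -> Prop) : Prop :=
  forall I, ideal D I -> exists (n : nat) (g : nat -> ps),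
    forall x, I x <-> gen_ideal D (fun y => exists i, (i < n)%N /\ y = g i) x.

Fixpoint ideal_pow (D I : ps -> Prop) (t : nat) : ps -> Prop :=
  if t is t'.+1 then
    gen_ideal D (fun y => exists a b, ideal_pow D I t' a /\ I b /\ y = ps_mul a b)
  else D.

Definition complete_adic (D I : ps -> Prop) : Prop :=
  forall u : nat -> ps, (forall i, D (u i)) ->
    (forall t, exists N, forall i j, (N <= i)%N -> (N <= j)%N ->
        ideal_pow D I t (ps_sub (u i) (u j))) ->
    exists d, D d /\ forall t, exists N, forall i, (N <= i)%N ->
        ideal_pow D I t (ps_sub (u i) d).

Definition complete_local (D : ps -> Prop) : Prop :=
  noetherian D /\ exists I, unique_max_ideal D I /\ complete_adic D I.

End PS.

(* Put q = p^m. If D contains some g with g(0) = f(0)^n, write f^n = g + h with h(0) = 0;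
   by Frobenius f^(nq) = g^q + h^q, and h^q lies in X^m K[[X]], hence in D. So when k <= K
   is a root extension, every power series has a power in D, and with a bounded root
   extension of D/M <= K all (nq)-th powers lie in D. The rest is the X-adic order on
   K[[X]]: of two nonzero series the one of smaller order divides the other, and the
   quotient has a power in D (AV); if all N-th powers lie in D, the N-th power of a member
   of least order of a family generates the ideal of their N-th powers (API); units of
   K[[X]] in D are units of D (M is the unique maximal ideal); and an element a/b of
   Frac D integral over D has ord a >= ord b. Conversely API, applied to the family
   c X^(m+1), bounds the exponents of D/M <= K. If [K:k] is finite, an ideal containing g
   of order r contains X^(r+m) K[[X]], so linear algebra over k makes it finitely
   generated; and M-adic Cauchy sequences converge coefficientwise since
   M^t <= X^t K[[X]]. *)

From HB Require Import structures.
From mathcomp Require Import all_boot all_order all_algebra.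
From mathcomp Require Import boolp zify ring.
Set Implicit Arguments. Unset Strict Implicit. Unset Printing Implicit Defensive.
Import GRing.Theory.
Local Open Scope ring_scope.

HB.instance Definition _ (K : fieldType) := gen_eqMixin (ps K).
HB.instance Definition _ (K : fieldType) := gen_choiceMixin (ps K).

Section PowerSeriesRing.
Variable K : fieldType.
Implicit Types f g h : ps K.

Lemma ps_addA : associative (@ps_add K).
Proof. by move=> f g h; apply: funext => n; apply: addrA. Qed.
Lemma ps_addC : commutative (@ps_add K).
Proof. by move=> f g; apply: funext => n; apply: addrC. Qed.
Lemma ps_add0 : left_id (@ps_zero K) (@ps_add K).
Proof. by move=> f; apply: funext => n; apply: add0r. Qed.
Lemma ps_addN : left_inverse (@ps_zero K) (@ps_opp K) (@ps_add K).
Proof. by move=> f; apply: funext => n; apply: addNr. Qed.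

HB.instance Definition _ := GRing.isZmodule.Build (ps K) ps_addA ps_addC ps_add0 ps_addN.

(* Coefficients of a product below N only see the truncations at N, which transports
   commutativity and associativity from {poly K}. *)
Definition ps_trunc (N : nat) f : {poly K} := \poly_(i < N) f i.

Lemma ps_mul_truncE N f g n :
  (n < N)%N -> ps_mul f g n = (ps_trunc N f * ps_trunc N g)`_n.
Proof.
move=> ltnN; rewrite coefM; apply: eq_bigr => -[i /=]; rewrite ltnS => lein _.
by rewrite !coef_poly (leq_ltn_trans lein ltnN) (leq_ltn_trans (leq_subr i n) ltnN).
Qed.

Lemma coefMr_eq (P Q R : {poly K}) n :
  (forall i, (i <= n)%N -> P`_i = Q`_i) -> (R * P)`_n = (R * Q)`_n.
Proof. by move=> eqPQ; rewrite !coefM; apply: eq_bigr => i _; rewrite eqPQ ?leq_subr. Qed.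

Lemma coef_trunc_mul N f g n :
  (n < N)%N -> (ps_trunc N (ps_mul f g))`_n = (ps_trunc N f * ps_trunc N g)`_n.
Proof. by move=> ltnN; rewrite coef_poly ltnN (ps_mul_truncE _ _ ltnN). Qed.

Lemma ps_mulC : commutative (@ps_mul K).
Proof.
by move=> f g; apply: funext => n; rewrite !(ps_mul_truncE (N := n.+1)) // mulrC.
Qed.

Lemma ps_mulA : associative (@ps_mul K).
Proof.
move=> f g h; apply: funext => n; rewrite !(ps_mul_truncE (N := n.+1)) //.
set T := ps_trunc n.+1.
rewrite (@coefMr_eq (T (ps_mul g h)) (T g * T h)) => [|i lein]; last first.
  by apply: coef_trunc_mul.
rewrite [in RHS]mulrC (@coefMr_eq (T (ps_mul f g)) (T f * T g)) => [|i lein].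
  by rewrite [in RHS]mulrC mulrA.
by apply: coef_trunc_mul.
Qed.

Lemma ps_mul1 : left_id (@ps_one K) (@ps_mul K).
Proof.
move=> f; apply: funext => n; rewrite /ps_mul big_ord_recl subn0 mul1r big1 ?addr0 //.
by move=> i _; rewrite mul0r.
Qed.

Lemma ps_mulDl : left_distributive (@ps_mul K) (@ps_add K).
Proof.
move=> f g h; apply: funext => n; rewrite /ps_mul /ps_add -big_split /=.
by apply: eq_bigr => i _; rewrite mulrDl.
Qed.

Lemma ps_one_neq0 : @ps_one K != @ps_zero K.
Proof. by apply/eqP => /(congr1 (fun f => f 0%N)) /eqP; rewrite oner_eq0. Qed.

HB.instance Definition _ := GRing.Zmodule_isComNzRing.Build (ps K)
  ps_mulA ps_mulC ps_mul1 ps_mulDl ps_one_neq0.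

End PowerSeriesRing.

Section PowerSeriesCoefficients.
Variable K : fieldType.
Implicit Types f g h : ps K.

Lemma ps_addE f g : ps_add f g = f + g. Proof. by []. Qed.
Lemma ps_mulE f g : ps_mul f g = f * g. Proof. by []. Qed.
Lemma ps_expE f n : ps_exp f n = f ^+ n.
Proof. by elim: n => //= n ->; rewrite exprS. Qed.
Lemma ps_sumE n (F : nat -> ps K) : ps_sum n F = \sum_(i < n) F i.
Proof. by elim: n => [|n /= ->]; rewrite ?big_ord0 // big_ord_recr. Qed.

Lemma coef_psD f g n : (f + g) n = f n + g n. Proof. by []. Qed.
Lemma coef_psN f n : (- f) n = - f n. Proof. by []. Qed.
Lemma coef_psB f g n : (f - g) n = f n - g n. Proof. by []. Qed.
Lemma coef_ps1 n : (1 : ps K) n = (n == 0%N)%:R. Proof. by case: n. Qed.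

Lemma coef_ps_sum I (r : seq I) (P : pred I) (F : I -> ps K) n :
  (\sum_(i <- r | P i) F i) n = \sum_(i <- r | P i) F i n.
Proof. exact: (big_morph (fun f : ps K => f n)). Qed.

Lemma coef_psM0 f g : (f * g) 0%N = f 0%N * g 0%N.
Proof. by rewrite -ps_mulE /ps_mul big_ord_recl big_ord0 addr0. Qed.

Lemma coef_psX0 f n : (f ^+ n) 0%N = f 0%N ^+ n.
Proof. by elim: n => [|n IHn]; rewrite ?exprS ?coef_psM0 ?IHn. Qed.

Lemma coef_ps_constM c f n : (ps_const c * f) n = c * f n.
Proof.
rewrite -ps_mulE /ps_mul big_ord_recl subn0 big1 ?addr0 // => i _.
by rewrite mul0r.
Qed.

Lemma ps_const_is_zmod_morphism : zmod_morphism (@ps_const K).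
Proof. by move=> a b; apply: funext => -[|n]; rewrite coef_psB //= subr0. Qed.

Lemma ps_const_is_monoid_morphism : monoid_morphism (@ps_const K).
Proof.
split=> [|a b]; first by apply: funext => -[].
by apply: funext => n; rewrite coef_ps_constM; case: n => //= n; rewrite mulr0.
Qed.

HB.instance Definition _ := GRing.isZmodMorphism.Build K (ps K) (@ps_const K)
  ps_const_is_zmod_morphism.
HB.instance Definition _ := GRing.isMonoidMorphism.Build K (ps K) (@ps_const K)
  ps_const_is_monoid_morphism.

Definition ps_X : ps K := fun n => (n == 1%N)%:R.

Lemma coef_ps_XM f n : (ps_X * f) n = if n is n'.+1 then f n' else 0.
Proof.
rewrite -ps_mulE /ps_mul big_ord_recl mul0r add0r.
case: n => [|n]; first by rewrite big_ord0.
rewrite big_ord_recl mul1r subSS subn0 big1 ?addr0 // => i _.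
by rewrite mul0r.
Qed.

Lemma coef_ps_XnM r f n :
  (ps_X ^+ r * f) n = if (r <= n)%N then f (n - r)%N else 0.
Proof.
elim: r n => [|r IHr] n; first by rewrite mul1r subn0.
by rewrite exprS -mulrA coef_ps_XM; case: n => [|n] //; rewrite IHr.
Qed.

Lemma coef_ps_Xn r n : (ps_X ^+ r) n = (n == r)%:R.
Proof.
rewrite -[ps_X ^+ r]mulr1 coef_ps_XnM coef_ps1.
by case: (ltngtP r n) => [ltrn|ltnr|->]; rewrite ?subnn // gtn_eqF ?subn_gt0 // ltnW.
Qed.

End PowerSeriesCoefficients.

Arguments ps_X {K}.

Section PowerSeriesOrder.
Variable K : fieldType.
Implicit Types f g h : ps K.

Definition ord_ge (r : nat) f := forall i, (i < r)%N -> f i = 0.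

Lemma ord_geW a b f : (a <= b)%N -> ord_ge b f -> ord_ge a f.
Proof. by move=> leab fb i ltia; apply: fb; apply: leq_trans leab. Qed.

Lemma ord_ge1 f : f 0%N = 0 -> ord_ge 1 f.
Proof. by move=> f0 [|]. Qed.

Lemma ord_ge0 r : ord_ge r (0 : ps K).
Proof. by []. Qed.

Lemma ord_geD r f g : ord_ge r f -> ord_ge r g -> ord_ge r (f + g).
Proof. by move=> fr gr i ltir; rewrite coef_psD fr ?gr ?addr0. Qed.

Lemma ord_geM a b f g : ord_ge a f -> ord_ge b g -> ord_ge (a + b) (f * g).
Proof.
move=> fa gb n ltn; rewrite -ps_mulE /ps_mul big1 // => -[i /=] ltin _.
have [ltia|leai] := ltnP i a; first by rewrite fa ?mul0r.
by rewrite gb ?mulr0 //; lia.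
Qed.

Lemma ord_geMl r f g : ord_ge r g -> ord_ge r (f * g).
Proof. by move=> gr; rewrite -[r]add0n; apply: ord_geM. Qed.

Lemma ord_geMr r f g : ord_ge r f -> ord_ge r (f * g).
Proof. by rewrite mulrC; apply: ord_geMl. Qed.

Lemma ord_geX r f n : ord_ge r f -> ord_ge (r * n) (f ^+ n).
Proof.
move=> fr; elim: n => [|n IHn]; first by rewrite muln0.
by rewrite exprS mulnS; apply: ord_geM.
Qed.

Lemma ord_ge_Xn r : ord_ge r (ps_X ^+ r : ps K).
Proof. by move=> i ltir; rewrite coef_ps_Xn ltn_eqF. Qed.

Lemma ps_Xn_neq0 r : ps_X ^+ r != 0 :> ps K.
Proof.
by apply/eqP => /(congr1 (fun f : ps K => f r)) /eqP; rewrite coef_ps_Xn eqxx oner_eq0.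
Qed.

Lemma coef_ps_mul_ord a b f g :
  ord_ge a f -> ord_ge b g -> (f * g) (a + b)%N = f a * g b.
Proof.
move=> fa gb; rewrite -ps_mulE /ps_mul.
have ltaab : (a < (a + b).+1)%N by lia.
rewrite (bigD1 (Ordinal ltaab)) //= addKn big1 ?addr0 // => -[i /=] ltiab neqia.
have [ltia|leai] := ltnP i a; first by rewrite fa ?mul0r.
have ltai : (a < i)%N by rewrite ltn_neqAle leai andbT eq_sym.
by rewrite gb ?mulr0 //; lia.
Qed.

Lemma coef_ps_exp_ord r f n : ord_ge r f -> (f ^+ n) (r * n)%N = f r ^+ n.
Proof.
move=> fr; elim: n => [|n IHn]; first by rewrite muln0.
by rewrite !exprS mulnS coef_ps_mul_ord ?IHn //; apply: ord_geX.
Qed.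

Lemma ps_lowest_coef f : f <> 0 -> exists r, f r != 0 /\ ord_ge r f.
Proof.
move=> f_neq0; have ex_nz : exists r, f r != 0.
  apply: contrapT => all0; apply: f_neq0; apply: funext => n.
  by apply: contrapT => /eqP fn; apply: all0; exists n.
case: (ex_minnP ex_nz) => r fr r_min; exists r; split=> // i ltir.
by apply/eqP; apply: contraTT ltir => /r_min; rewrite leqNgt.
Qed.

Definition ps_shift (r : nat) f : ps K := fun n => f (n + r)%N.

Lemma ps_shiftK r f : ord_ge r f -> ps_X ^+ r * ps_shift r f = f.
Proof.
move=> fr; apply: funext => n; rewrite coef_ps_XnM.
have [lern|ltnr] := leqP r n; first by rewrite /ps_shift subnK.
by rewrite fr.
Qed.

End PowerSeriesOrder.

Section PowerSeriesInverse.
Variable K : fieldType.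
Implicit Types f g h : ps K.

Section Inverse.
Variable u : ps K.

(* The coefficient j of the inverse is solved from (ps_inv * u) j = (j == 0). *)
Fixpoint inv_approx (n : nat) : nat -> K :=
  if n is n'.+1 then
    fun j => if j == n' then
      (u 0%N)^-1 * ((n' == 0%N)%:R - \sum_(i < n') u (n' - i)%N * inv_approx n' i)
    else inv_approx n' j
  else fun=> 0.

Definition ps_inv : ps K := fun j => inv_approx j.+1 j.

Lemma inv_approx_stable n j : (j < n)%N -> inv_approx n j = ps_inv j.
Proof.
elim: n => // n IHn; rewrite ltnS leq_eqVlt => /orP[/eqP->|ltjn] //=.
by rewrite ltn_eqF // IHn.
Qed.

Lemma ps_invE n :
  ps_inv n = (u 0%N)^-1 * ((n == 0%N)%:R - \sum_(i < n) u (n - i)%N * ps_inv i).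
Proof.
rewrite /ps_inv /= eqxx; congr (_ * (_ - _)); apply: eq_bigr => -[i /= ltin] _.
by rewrite inv_approx_stable.
Qed.

Lemma ps_invK : u 0%N != 0 -> ps_inv * u = 1.
Proof.
move=> u0; apply: funext => n; rewrite -ps_mulE /ps_mul big_ord_recr /= subnn.
rewrite [ps_inv n]ps_invE mulrAC mulVf // mul1r coef_ps1.
rewrite (eq_bigr (fun i : 'I_n => u (n - i)%N * ps_inv i)) => [|i _]; last exact: mulrC.
by rewrite addrC subrK.
Qed.

End Inverse.

Lemma ps_dvd_ord r g y :
  g r != 0 -> ord_ge r g -> ord_ge r y -> exists d, y = d * g.
Proof.
move=> gr_neq0 gr yr.
have shift_g_unit : ps_shift r g 0%N != 0 by [].
exists (ps_shift r y * ps_inv (ps_shift r g)).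
rewrite -{1}(ps_shiftK yr) -{2}(ps_shiftK gr) mulrCA -mulrA ps_invK // mulr1.
by rewrite mulrC.
Qed.

Lemma ord_ge_divl r s d g :
  g r != 0 -> ord_ge r g -> ord_ge (r + s) (d * g) -> ord_ge s d.
Proof.
move=> gr_neq0 gr dgrs.
case: (pselect (d = 0)) => [->|/ps_lowest_coef[j [dj_neq0 dj]]]; first exact: ord_ge0.
suff lesj : (s <= j)%N by apply: ord_geW dj.
rewrite leqNgt; apply/negP => ltjs.
have := coef_ps_mul_ord dj gr; rewrite dgrs; last by lia.
by move/esym/eqP; rewrite mulf_eq0 (negbTE dj_neq0) (negbTE gr_neq0).
Qed.

End PowerSeriesInverse.

Lemma root_ext_of_bounded (K : fieldType) (A B : K -> Prop) :
  bounded_root_ext A B -> root_ext A B.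
Proof. by move=> [n [n_gt0 An]] x Bx; exists n; split=> //; apply: An. Qed.

Section IntermediateDomains.
Variables (K : fieldType) (k : K -> Prop) (m : nat) (D : ps K -> Prop).
Hypothesis k_subfield : is_subfield k.
Hypothesis D_subring : is_subring D.
Hypothesis kXm_sub_D : forall f, k_plus_XmKX k m f -> D f.
Implicit Types f g h : ps K.

Lemma D1 : D 1. Proof. by case: D_subring. Qed.
Lemma D_sub f g : D f -> D g -> D (f - g).
Proof. by case: D_subring => _ [closedB _]; apply: closedB. Qed.
Lemma D_mul f g : D f -> D g -> D (f * g).
Proof. by case: D_subring => _ [_ closedM]; apply: closedM. Qed.
Lemma D0 : D 0. Proof. by rewrite -(subrr 1); apply: D_sub; apply: D1. Qed.
Lemma D_opp f : D f -> D (- f). Proof. by rewrite -sub0r; apply: D_sub D0. Qed.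
Lemma D_add f g : D f -> D g -> D (f + g).
Proof. by move=> Df Dg; rewrite -[g]opprK; apply: D_sub => //; apply: D_opp. Qed.
Lemma D_exp f n : D f -> D (f ^+ n).
Proof. by move=> Df; elim: n => [|n IHn]; [apply: D1 | rewrite exprS; apply: D_mul]. Qed.

Lemma k1 : k 1. Proof. by case: k_subfield. Qed.
Lemma k_sub a b : k a -> k b -> k (a - b).
Proof. by case: k_subfield => _ [closedB _]; apply: closedB. Qed.
Lemma k_mul a b : k a -> k b -> k (a * b).
Proof. by case: k_subfield => _ [_ [closedM _]]; apply: closedM. Qed.
Lemma k_inv a : k a -> a != 0 -> k a^-1.
Proof. by case: k_subfield => _ [_ [_ closedV]]; apply: closedV. Qed.
Lemma k0 : k 0. Proof. by rewrite -(subrr 1); apply: k_sub; apply: k1. Qed.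
Lemma k_opp a : k a -> k (- a). Proof. by rewrite -sub0r; apply: k_sub k0. Qed.
Lemma k_add a b : k a -> k b -> k (a + b).
Proof. by move=> ka kb; rewrite -[b]opprK; apply: k_sub => //; apply: k_opp. Qed.

Lemma D_const c : k c -> D (ps_const c).
Proof. by move=> kc; apply: kXm_sub_D; exists c, (0 : ps K); rewrite ps_addE addr0. Qed.

Lemma D_ord_ge f : ord_ge m f -> D f.
Proof.
move=> fm; apply: kXm_sub_D; exists 0, f; rewrite ps_addE rmorph0 add0r.
by split; first exact: k0.
Qed.

Lemma k_residue c : k c -> residue D c.
Proof. by move=> kc; exists (ps_const c); split; first exact: D_const. Qed.

Lemma bounded_residue_of_k :
  bounded_root_ext k (@fullK K) -> bounded_root_ext (residue D) (@fullK K).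
Proof. by move=> [n [n_gt0 kn]]; exists n; split=> // x _; apply/k_residue/kn. Qed.

Lemma residue_mul a b : residue D a -> residue D b -> residue D (a * b).
Proof.
move=> [f [Df <-]] [g [Dg <-]]; exists (f * g).
by split; [apply: D_mul | rewrite coef_psM0].
Qed.

Lemma gen_ideal_mem S x : S x -> gen_ideal D S x.
Proof. by move=> Sx I _; apply. Qed.

Lemma ideal_ord_ge t : ideal D (fun x => D x /\ ord_ge t x).
Proof.
split; first by move=> x [].
split; first by split; [apply: D0 | apply: ord_ge0].
split; first by move=> x y [Dx xt] [Dy yt]; split; [apply: D_add | apply: ord_geD].
by move=> d x Dd [Dx xt]; split; [apply: D_mul | apply: ord_geMl].
Qed.

Lemma ideal_multiples g : D g -> ideal D (fun x => exists d, D d /\ x = d * g).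
Proof.
move=> Dg; split; first by move=> x [d [Dd ->]]; apply: D_mul.
split; first by exists 0; rewrite mul0r; split; first exact: D0.
split=> [x y [d [Dd ->]] [e [De ->]]|c x Dc [d [Dd ->]]].
  by exists (d + e); rewrite mulrDl; split; first exact: D_add.
by exists (c * d); rewrite ps_mulE mulrA; split; first exact: D_mul.
Qed.

Lemma maxM_ideal : ideal D (maxM D).
Proof.
split; first by move=> x [].
split; first by split; first exact: D0.
split=> [x y [Dx x0] [Dy y0]|d x Dd [Dx x0]].
  by split; [apply: D_add | rewrite ps_addE coef_psD x0 y0 addr0].
by split; [apply: D_mul | rewrite ps_mulE coef_psM0 x0 mulr0].
Qed.

Lemma API_of_exp N : (0 < N)%N -> (forall f, D (f ^+ N)) -> API_domain D.
Proof.
move=> N_gt0 D_expN S S_D [s1 Ss1].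
pose has_ord r := `[< exists s, S s /\ s r != 0 /\ ord_ge r s >].
have ex_ord : exists r, has_ord r.
  have [_ /ps_lowest_coef[r [s1r s1_ord]]] := S_D _ Ss1.
  by exists r; apply/asboolP; exists s1.
case: (ex_minnP ex_ord) => r0 /asboolP[s0 [Ss0 [s0r0 s0_ord]]] r0_min.
have Ds0 : D s0 by case: (S_D _ Ss0).
have s0_dvd s : S s -> exists e, s = e * s0.
  move=> Ss; have [_ /ps_lowest_coef[r [sr s_ord]]] := S_D _ Ss.
  apply: ps_dvd_ord s0r0 s0_ord (ord_geW _ s_ord); apply: r0_min.
  by apply/asboolP; exists s.
exists N; split=> //; exists (ps_exp s0 N); rewrite ps_expE; split; first exact: D_exp.
move=> x; split=> [gen_x | [d [Dd ->]] I [_ [_ [_ I_mul]]] I_gen]; last first.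
  by apply: I_mul => //; apply: I_gen; exists s0; rewrite ps_expE.
apply: (gen_x (fun y => exists d, D d /\ y = d * s0 ^+ N)).
  exact/ideal_multiples/D_exp.
move=> _ [s [Ss ->]]; have [e ->] := s0_dvd _ Ss.
by exists (e ^+ N); rewrite ps_expE exprMn.
Qed.

(* If ord a < ord b, only a^n contributes to the coefficient of degree n * ord a. *)
Lemma integral_frac_dvd a b : b <> 0 -> integral_frac D a b -> exists f, a = b * f.
Proof.
move=> b_neq0 [n [c [n_gt0 [_ integral_eq]]]].
case: (pselect (a = 0)) => [->|/ps_lowest_coef[ra [ara a_ord]]].
  by exists 0; rewrite mulr0.
have [rb [brb b_ord]] := ps_lowest_coef b_neq0.
have [lebra|ltarb] := leqP rb ra.
  by have [d ->] := ps_dvd_ord brb b_ord (ord_geW lebra a_ord); exists d; rewrite mulrC.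
move: integral_eq => /(congr1 (fun f => f (ra * n)%N)).
rewrite ps_sumE ps_addE ps_expE coef_psD coef_ps_sum big1 => [|[i /= ltin] _].
  by rewrite addr0 coef_ps_exp_ord // => /eqP; rewrite expf_eq0 (negbTE ara) andbF.
rewrite !ps_mulE !ps_expE; apply: (ord_geMl (r := (ra * n).+1)) => //.
have := ord_geM (ord_geX (n := i) a_ord) (ord_geX (n := n - i) b_ord); apply: ord_geW.
have : (ra * (n - i) < rb * (n - i))%N by rewrite ltn_pmul2r ?subn_gt0.
have : (ra * n = ra * i + ra * (n - i))%N by rewrite -mulnDr subnKC // ltnW.
lia.
Qed.

Lemma ideal_pow_ord_ge t x : ideal_pow D (maxM D) t x -> D x /\ ord_ge t x.
Proof.
elim: t x => [|t IHt] x /=; first by split.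
move/(_ (fun y => D y /\ ord_ge t.+1 y)); apply; first exact: ideal_ord_ge.
move=> _ [a [b [/IHt[Da a_ord] [[Db b0] ->]]]]; split; first exact: D_mul.
by rewrite -addn1; apply: ord_geM => //; apply: ord_ge1.
Qed.

Lemma ord_ge_ideal_pow t x : ord_ge (m.+1 * t.+1) x -> ideal_pow D (maxM D) t x.
Proof.
elim: t x => [|t IHt] x x_ord /=.
  by apply: D_ord_ge; apply: ord_geW x_ord; rewrite muln1.
apply: gen_ideal_mem; exists (ps_shift m.+1 x), (ps_X ^+ m.+1).
split; first by apply: IHt => i lti; apply: x_ord; rewrite mulnS; lia.
split; last by rewrite ps_mulE mulrC ps_shiftK //; apply: ord_geW x_ord; rewrite mulnS; lia.
by split; [apply/D_ord_ge/(ord_geW (leqnSn m))/ord_ge_Xn | rewrite coef_ps_Xn].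
Qed.

(* The coefficient n of u i is constant from i = Nf n.+1 on, since
   M^(n+1) <= X^(n+1) K[[X]]. *)
Lemma complete_maxM : complete_adic D (maxM D).
Proof.
move=> u Du /choice[Nf u_cauchy].
pose B T := (\max_(j < T) Nf j.+1)%N.
have leB T n : (n < T)%N -> (Nf n.+1 <= B T)%N.
  by move=> ltnT; apply: (@leq_bigmax _ (fun j : 'I_T => Nf j.+1) (Ordinal ltnT)).
pose d : ps K := fun n => u (Nf n.+1) n.
have u_to_d T i : (B T <= i)%N -> ord_ge T (u i - d).
  move=> leBi n ltnT; apply/eqP; rewrite coef_psB subr_eq0; apply/eqP.
  have leNi := leq_trans (leB _ _ ltnT) leBi.
  have /ideal_pow_ord_ge[_ u_ord] := u_cauchy n.+1 i (Nf n.+1) leNi (leqnn _).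
  by apply/eqP; rewrite -subr_eq0; apply/eqP; apply: u_ord.
exists d; split.
  rewrite -[d](subKr (u (B m))); apply: D_sub; first exact: Du.
  exact/D_ord_ge/u_to_d.
by move=> t; exists (B (m.+1 * t.+1)) => i leBi; apply/ord_ge_ideal_pow/u_to_d.
Qed.

Section Frobenius.
Variable p : nat.
Hypothesis p_char : p \in [pchar K].

(* Frobenius on f^n = g + (f^n - g), where the second summand vanishes at 0. *)
Lemma exp_mem_of_residue f n : residue D (f 0%N ^+ n) -> D (f ^+ (n * p ^ m)).
Proof.
have p_prime := pcharf_prime p_char.
move=> [g [Dg g0]]; rewrite exprM -[f ^+ n](subrK g) exprDn_pchar; last first.
  by rewrite pnatX pnatE // (rmorph_pchar (@ps_const K) p_char).
apply: D_add; last exact: D_exp.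
apply/D_ord_ge/(ord_geW _ (ord_geX (n := p ^ m) (ord_ge1 _))).
  by rewrite mul1n ltnW // ltn_expl // prime_gt1.
by rewrite coef_psB coef_psX0 g0 subrr.
Qed.

Lemma muln_pexp_gt0 n : (0 < n)%N -> (0 < n * p ^ m)%N.
Proof.
by move=> n_gt0; rewrite muln_gt0 n_gt0 expn_gt0 prime_gt0 // (pcharf_prime p_char).
Qed.

Lemma exp_mem_of_root_ext :
  root_ext k (@fullK K) -> forall f, exists N, (0 < N)%N /\ D (f ^+ N).
Proof.
move=> k_root f; have [n [n_gt0 kfn]] := k_root (f 0%N) I.
by exists (n * p ^ m)%N; split; [apply: muln_pexp_gt0 | apply/exp_mem_of_residue/k_residue].
Qed.

Lemma API_of_bounded_residue : bounded_root_ext (residue D) (@fullK K) -> API_domain D.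
Proof.
move=> [n [n_gt0 res_n]]; apply: (API_of_exp (N := n * p ^ m)); first exact: muln_pexp_gt0.
by move=> f; apply/exp_mem_of_residue/res_n.
Qed.

End Frobenius.

Section RootExtension.
Hypothesis D_root : forall f, exists N, (0 < N)%N /\ D (f ^+ N).

Lemma D_unit f : D f -> f 0%N != 0 -> exists v, D v /\ v * f = 1.
Proof.
move=> Df f0; have [[|N] [//= _ DvN]] := D_root (ps_inv f).
exists (ps_inv f); split; last exact: ps_invK.
have -> : ps_inv f = ps_inv f ^+ N.+1 * f ^+ N.
  by rewrite exprS -mulrA -exprMn ps_invK // expr1n mulr1.
by apply: D_mul => //; apply: D_exp.
Qed.

Lemma residue_inv a : residue D a -> a != 0 -> residue D a^-1.
Proof.
move=> [f [Df fa]] a_neq0; have f0 : f 0%N != 0 by rewrite fa.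
have [v [Dv vf]] := D_unit Df f0; exists v; split=> //.
have := congr1 (fun g => g 0%N) vf; rewrite coef_psM0 fa coef_ps1 => va.
by rewrite -[v 0%N]mulr1 -(mulfV a_neq0) mulrA va mul1r.
Qed.

Lemma ideal_one_of_unit I f : ideal D I -> I f -> f 0%N != 0 -> I 1.
Proof.
move=> [I_D [_ [_ I_mul]]] If f0; have [v [Dv vf]] := D_unit (I_D _ If) f0.
by rewrite -vf; apply: I_mul.
Qed.

Lemma ideal_sub_maxM I : ideal D I -> ~ I 1 -> forall x, I x -> maxM D x.
Proof.
move=> I_ideal I1 x Ix; split; first by case: I_ideal => I_D _; apply: I_D.
by apply: contrapT => /eqP x0; apply/I1/(ideal_one_of_unit I_ideal Ix x0).
Qed.

Lemma maxM_unique : unique_max_ideal D (maxM D).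
Proof.
have M1 : ~ maxM D 1 by move=> [_ /eqP]; rewrite oner_eq0.
have M_max : max_ideal D (maxM D).
  split; first exact: maxM_ideal.
  split=> // J J_ideal MJ; case: (pselect (J 1)) => J1; [right | left] => // x.
  by split=> [/(ideal_sub_maxM J_ideal J1)|/MJ].
split=> // J [J_ideal [J1 J_max]]; have JM := ideal_sub_maxM J_ideal J1.
by case: (J_max _ maxM_ideal JM) => [MJ|/M1 []] x; split=> [/JM|/MJ].
Qed.

Lemma dvd_exp_of_ord a b r : a r != 0 -> ord_ge r a -> ord_ge r b ->
  exists N, (0 < N)%N /\ dvd_in D (ps_exp a N) (ps_exp b N).
Proof.
move=> ar a_ord b_ord; have [e ->] := ps_dvd_ord ar a_ord b_ord.
have [N [N_gt0 DeN]] := D_root e; exists N; split=> //.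
by exists (e ^+ N); split=> //; rewrite !ps_expE exprMn mulrC.
Qed.

Lemma AV_of_root : AV_domain D.
Proof.
move=> a b _ _ /ps_lowest_coef[ra [ara a_ord]] /ps_lowest_coef[rb [brb b_ord]].
have [lerab|/ltnW lerba] := leqP ra rb.
  have [N [N_gt0 dvd_ab]] := dvd_exp_of_ord ara a_ord (ord_geW lerab b_ord).
  by exists N; split=> //; left.
have [N [N_gt0 dvd_ba]] := dvd_exp_of_ord brb b_ord (ord_geW lerba a_ord).
by exists N; split=> //; right.
Qed.

(* f = (X^(m+1) f) / X^(m+1), a root of Y^N - f^N. *)
Lemma integral_closure_KX : integral_closure_is_KX D.
Proof.
split=> [f|a b _ _]; last exact: integral_frac_dvd.
have [[|N] [//= _ DfN]] := D_root f.
have DX : D (ps_X ^+ m.+1) by apply/D_ord_ge/(ord_geW (leqnSn m))/ord_ge_Xn.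
exists (ps_X ^+ m.+1 * f), (ps_X ^+ m.+1); split.
  by apply/D_ord_ge/ord_geMr/(ord_geW (leqnSn m))/ord_ge_Xn.
split=> //; split; first exact/eqP/ps_Xn_neq0.
split=> //.
exists N.+1, (fun i => if i == 0%N then - f ^+ N.+1 else 0); split=> //.
split; first by case=> [|i] /=; [apply: D_opp | apply: D0].
rewrite ps_sumE big_ord_recl big1 => [|i _]; last by rewrite ps_mulE mul0r.
rewrite ps_addE !ps_mulE !ps_expE /= subn0 expr0 mul1r addr0 exprMn mulNr.
by rewrite mulrC subrr.
Qed.

(* Comparing coefficients of X^R gives c^n = d_c(0) g(R) and 1 = d_1(0) g(R). *)
Lemma residue_exp_of_multiples n R g : (0 < n)%N -> ord_ge R g ->
    (forall c, c != 0 -> exists d, D d /\ ps_const (c ^+ n) * ps_X ^+ R = d * g) ->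
  forall c, residue D (c ^+ n).
Proof.
move=> n_gt0 g_ord multiples c.
have coef_R a d : ps_const a * ps_X ^+ R = d * g -> a = d 0%N * g R.
  move/(congr1 (fun f => f R)); rewrite coef_ps_constM coef_ps_Xn eqxx mulr1.
  by rewrite -[in RHS](add0n R) coef_ps_mul_ord.
have [d1 [Dd1 /coef_R]] := multiples 1 (oner_neq0 _); rewrite expr1n => one.
have d1_unit : d1 0%N != 0 by apply: contra_eq_neq one => ->; rewrite mul0r oner_eq0.
have gR : g R = (d1 0%N)^-1 by apply: (mulfI d1_unit); rewrite -one mulfV.
have [->|c_neq0] := eqVneq c 0.
  by rewrite expr0n gtn_eqF //; exists 0; split; first exact: D0.
have [dc [Ddc /coef_R ->]] := multiples c c_neq0; rewrite gR.
by apply: residue_mul; [exists dc | apply: residue_inv => //; exists d1].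
Qed.

(* Apply API to the family of all c X^(m+1) with c <> 0. *)
Lemma bounded_residue_of_API : API_domain D -> bounded_root_ext (residue D) (@fullK K).
Proof.
move=> D_API; pose S (s : ps K) := exists c : K, c != 0 /\ s = ps_const c * ps_X ^+ m.+1.
have S_exp (c : K) n :
    (ps_const c * ps_X ^+ m.+1) ^+ n = ps_const (c ^+ n) * ps_X ^+ (m.+1 * n).
  by rewrite exprMn rmorphXn exprM.
have S_D s : S s -> D s /\ s <> 0.
  move=> [c [c_neq0 ->]]; split.
    by apply/D_ord_ge/ord_geMl/(ord_geW (leqnSn m))/ord_ge_Xn.
  move/(congr1 (fun f => f m.+1)); rewrite coef_ps_constM coef_ps_Xn eqxx mulr1.
  exact/eqP.
have [|n [n_gt0 [g [Dg gen_g]]]] := D_API S S_D.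
  by exists (ps_const 1 * ps_X ^+ m.+1), 1; rewrite oner_eq0.
exists n; split=> // c _; apply: (residue_exp_of_multiples (R := m.+1 * n) (g := g)) => //.
  have g_gen : gen_ideal D (fun y => exists s, S s /\ y = ps_exp s n) g.
    by apply/gen_g; exists 1; rewrite ps_mulE mul1r; split; first exact: D1.
  have [] // := g_gen (fun x => D x /\ ord_ge (m.+1 * n) x) (ideal_ord_ge _).
  move=> _ [s [[c' [_ ->]] ->]]; rewrite ps_expE S_exp; split.
    apply/D_ord_ge/ord_geMl/(ord_geW _ (@ord_ge_Xn K _)).
    by apply: leq_trans (leqnSn m) _; rewrite leq_pmulr.
  exact/ord_geMl/ord_ge_Xn.
move=> c' c'_neq0; apply: (proj1 (gen_g _)); apply: gen_ideal_mem.
by exists (ps_const c' * ps_X ^+ m.+1); rewrite ps_expE S_exp; split; first by exists c'.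
Qed.

End RootExtension.

Inductive k_span (ws : seq (ps K)) : ps K -> Prop :=
| k_span0 : k_span ws 0
| k_spanS c w x : k c -> w \in ws -> k_span ws x -> k_span ws (ps_const c * w + x).

Lemma k_spanD ws x y : k_span ws x -> k_span ws y -> k_span ws (x + y).
Proof.
elim=> [|c w x' kc ws_w _ IHx] span_y; first by rewrite add0r.
by rewrite -addrA; apply: k_spanS => //; apply: IHx.
Qed.

Lemma k_spanZ ws a x : k a -> k_span ws x -> k_span ws (ps_const a * x).
Proof.
move=> ka; elim=> [|c w x' kc ws_w _ IHx]; first by rewrite mulr0; apply: k_span0.
by rewrite mulrDr mulrA -rmorphM; apply: k_spanS => //; apply: k_mul.
Qed.

Lemma k_span_cons ws w0 x : k_span ws x -> k_span (w0 :: ws) x.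
Proof.
elim=> [|c w x' kc ws_w _ IHx]; first exact: k_span0.
by apply: k_spanS => //; rewrite in_cons ws_w orbT.
Qed.

Lemma k_span_consP w ws y : k_span (w :: ws) y ->
  exists c y', [/\ k c, k_span ws y' & y = ps_const c * w + y'].
Proof.
elim=> [|c w1 x kc w1_in _ [c' [x' [kc' span_x' ->]]]].
  by exists 0, 0; rewrite rmorph0 mul0r addr0; split; [exact: k0 | exact: k_span0 |].
move: w1_in; rewrite in_cons => /orP[/eqP->|ws_w1].
  by exists (c + c'), x'; rewrite rmorphD mulrDl addrA; split=> //; apply: k_add.
exists c', (ps_const c * w1 + x'); rewrite addrCA.
by split=> //; apply: k_spanS.
Qed.

Definition span_mod N ws x := exists y, k_span ws y /\ ord_ge N (x - y).

Definition k_subspace (V : ps K -> Prop) :=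
  [/\ V 0, forall x y, V x -> V y -> V (x + y)
     & forall a x, k a -> V x -> V (ps_const a * x)].

Lemma k_subspace_span_mod N ws : k_subspace (span_mod N ws).
Proof.
split.
- by exists 0; split; [exact: k_span0 | rewrite subrr].
- move=> x y [x' [span_x' xx']] [y' [span_y' yy']]; exists (x' + y').
  by split; [apply: k_spanD | rewrite opprD addrACA; apply: ord_geD].
- move=> a x ka [x' [span_x' xx']]; exists (ps_const a * x').
  by split; [apply: k_spanZ | rewrite -mulrBr; apply: ord_geMl].
Qed.

Lemma k_subspaceI V W : k_subspace V -> k_subspace W -> k_subspace (fun x => V x /\ W x).
Proof.
move=> [V0 VD VZ] [W0 WD WZ]; split=> //.
- by move=> x y [Vx Wx] [Vy Wy]; split; [apply: VD | apply: WD].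
- by move=> a x ka [Vx Wx]; split; [apply: VZ | apply: WZ].
Qed.

(* Either ws already spans V, or some v in V needs w; then v and a spanning list of
   V /\ span_mod N ws span V. *)
Lemma k_subspace_fg_mod N ws V : k_subspace V -> (forall x, V x -> span_mod N ws x) ->
  exists vs, (forall v, v \in vs -> V v) /\ forall x, V x -> span_mod N vs x.
Proof.
elim: ws V => [|w ws IHws] V V_sub V_span; first by exists [::].
case: (pselect (forall x, V x -> span_mod N ws x)) => [V_ws|]; first exact: IHws.
move=> /existsNP[v /not_implyP[Vv v_notin]].
have [y0 [/k_span_consP[c0 [y0' [kc0 span_y0' ->]]] vy0]] := V_span v Vv.
have c0_neq0 : c0 != 0.
  apply: contra_notN v_notin => /eqP c00; exists y0'; split=> //.
  by move: vy0; rewrite c00 rmorph0 mul0r add0r.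
pose V' x := V x /\ span_mod N ws x.
have [vs [V'_vs V'_span]] : exists vs, (forall v, v \in vs -> V' v) /\
    forall x, V' x -> span_mod N vs x.
  by apply: IHws; [exact: k_subspaceI (k_subspace_span_mod _ _) | move=> x []].
exists (v :: vs); split=> [u|x Vx].
  by rewrite in_cons => /orP[/eqP->|/V'_vs[]].
have [y [/k_span_consP[a [y' [ka span_y' ->]]] xy]] := V_span x Vx.
pose t := a / c0; have kt : k t by apply: k_mul => //; apply: k_inv.
have /V'_span[z [span_z xz]] : V' (x + ps_const (- t) * v).
  split; first by case: V_sub => _ VD VZ; apply: VD => //; apply: VZ => //; apply: k_opp.
  exists (y' + ps_const (- t) * y0'); split.
    by apply: k_spanD => //; apply: k_spanZ => //; apply: k_opp.
  have -> : x + ps_const (- t) * v - (y' + ps_const (- t) * y0') =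
      (x - (ps_const a * w + y')) + ps_const (- t) * (v - (ps_const c0 * w + y0')).
    have ta : ps_const a = ps_const t * ps_const c0 by rewrite -rmorphM divfK.
    by rewrite ta rmorphN; ring.
  by apply: ord_geD => //; apply: ord_geMl.
exists (ps_const t * v + z); split.
  by apply: k_spanS => //; [rewrite in_cons eqxx | apply: k_span_cons].
suff -> : x - (ps_const t * v + z) = x + ps_const (- t) * v - z by [].
by rewrite rmorphN; ring.
Qed.

Lemma span_mod_of_finite_degree : finite_degree k ->
  forall N, exists ws, forall x, span_mod N ws x.
Proof.
move=> [ne [e e_span]] N.
exists [seq ps_const (e j) * ps_X ^+ i | i <- iota 0 N, j <- iota 0 ne] => x.
exists (\sum_(i < N) ps_const (x i) * ps_X ^+ i); split.
  apply: big_ind => [|y z|[i /= ltiN] _]; [exact: k_span0 | exact: k_spanD |].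
  have [c [kc ->]] := e_span (x i); rewrite rmorph_sum mulr_suml.
  apply: big_ind => [|y z|[j /= ltjn] _]; [exact: k_span0 | exact: k_spanD |].
  rewrite rmorphM -mulrA -[X in k_span _ X]addr0; apply: k_spanS => //; last exact: k_span0.
  by apply: allpairs_f; rewrite mem_iota.
move=> n ltnN; rewrite coef_psB coef_ps_sum (bigD1 (Ordinal ltnN)) //=.
rewrite coef_ps_constM coef_ps_Xn eqxx mulr1 big1 ?addr0 ?subrr // => -[i /= ltiN].
by rewrite -val_eqE /= coef_ps_constM coef_ps_Xn eq_sym => /negbTE->; rewrite mulr0.
Qed.

Lemma k_span_ideal J ws : ideal D J -> (forall w, w \in ws -> J w) ->
  forall y, k_span ws y -> J y.
Proof.
move=> [_ [J0 [JD JM]]] J_ws y; elim=> // c w x kc ws_w _ Jx.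
by apply: JD => //; apply: JM; [exact: D_const | exact: J_ws].
Qed.

(* For g in I of order r, X^(r+m) K[[X]] <= g X^m K[[X]] <= I, so g and a list spanning
   I modulo X^(r+m) over k generate I. *)
Lemma noetherian_of_finite_degree : finite_degree k -> noetherian D.
Proof.
move=> k_fin I I_ideal; have [I_D [I0 [ID IM]]] := I_ideal.
case: (pselect (exists g, I g /\ g <> 0)) => [[g [Ig /ps_lowest_coef[r [gr g_ord]]]]|I_eq0].
  have I_sub : k_subspace I by split=> // a x ka; apply: IM; apply: D_const.
  have [ws ws_span] := span_mod_of_finite_degree k_fin (r + m).
  have [vs [I_vs I_span]] := k_subspace_fg_mod I_sub (fun x _ => ws_span x).
  exists (size vs).+1, (nth 0 (g :: vs)) => x.
  split=> [Ix J J_ideal J_gen|gen_x]; last first.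
    by apply: (gen_x I I_ideal) => _ [[|i] [ltis ->]] //=; apply/I_vs/mem_nth.
  have J_vs w : w \in vs -> J w.
    move=> vs_w; apply: J_gen; exists (index w vs).+1.
    by rewrite ltnS index_mem /= nth_index.
  have [y [span_y xy]] := I_span x Ix.
  have [d xy_dg] := ps_dvd_ord gr g_ord (ord_geW (leq_addr m r) xy).
  have d_ord : ord_ge m d by apply: (ord_ge_divl gr g_ord); rewrite -xy_dg.
  have [_ [_ [JD JM]]] := J_ideal; rewrite -(subrK y x) xy_dg.
  apply: JD; last exact: k_span_ideal J_ideal J_vs _ span_y.
  by apply: JM; [exact: D_ord_ge | apply: J_gen; exists 0%N].
exists 0%N, (fun=> 0) => x; split=> [Ix J [_ [J0 _]] _|gen_x].
  suff -> : x = 0 by [].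
  by apply: contrapT => x_neq0; apply: I_eq0; exists x.
by apply: (gen_x I I_ideal) => s [i []].
Qed.

End IntermediateDomains.

Theorem theorem7 (K : fieldType) (k : K -> Prop) (p m : nat) (D : ps K -> Prop) :
  is_subfield k ->
  p \in [pchar K] ->
  is_subring D ->
  (forall f, k_plus_XmKX k m f -> D f) ->
  (* (i) *)
  (root_ext k (@fullK K) ->
     quasilocal D /\ AV_domain D /\ integral_closure_is_KX D) /\
  (* (ii) *)
  (bounded_root_ext k (@fullK K) ->
     quasilocal D /\ API_domain D /\ integral_closure_is_KX D) /\
  (* (iii) *)
  (root_ext k (@fullK K) ->
     ((unique_max_ideal D (maxM D) /\ API_domain D) <->
      bounded_root_ext (residue D) (@fullK K))) /\
  (* (iv) *)
  (finite_degree k ->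
     (root_ext k (@fullK K) -> complete_local D /\ AV_domain D) /\
     (bounded_root_ext k (@fullK K) -> complete_local D /\ API_domain D)).
Proof.
move=> k_subfield p_char D_subring kXm_sub_D.
have D_root := exp_mem_of_root_ext k_subfield D_subring kXm_sub_D p_char.
have maxM_max k_root := maxM_unique D_subring (D_root k_root).
have local_D k_root : quasilocal D := ex_intro _ _ (maxM_max k_root).
have AV_D k_root := AV_of_root (D_root k_root).
have intclos k_root := integral_closure_KX k_subfield D_subring kXm_sub_D (D_root k_root).
have API_D := API_of_bounded_residue k_subfield D_subring kXm_sub_D p_char.
have API_of_k_bounded k_bounded := API_D (bounded_residue_of_k kXm_sub_D k_bounded).
have complete_D := complete_maxM k_subfield D_subring kXm_sub_D.
have complete_local_D : finite_degree k -> root_ext k (@fullK K) -> complete_local D.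
  move=> k_fin k_root; split.
    exact: noetherian_of_finite_degree k_subfield kXm_sub_D k_fin.
  by exists (maxM D); split; [exact: maxM_max | exact: complete_D].
split=> [k_root|]; first by split; [exact: local_D | split; [exact: AV_D | exact: intclos]].
split=> [k_bounded|].
  have k_root := root_ext_of_bounded k_bounded.
  by split; [exact: local_D | split; [exact: API_of_k_bounded | exact: intclos]].
split=> [k_root|k_fin].
  split=> [[_]|res_bounded]; last by split; [exact: maxM_max | exact: API_D].
  exact: bounded_residue_of_API k_subfield D_subring kXm_sub_D (D_root k_root).
split=> [k_root|k_bounded]; first by split; [exact: complete_local_D | exact: AV_D].
have k_root := root_ext_of_bounded k_bounded.
by split; [exact: complete_local_D | exact: API_of_k_bounded].
Qed.
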